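(* For any $\gamma>0$ and any continuous function $f:[0,1]\to\mathbb R$, there exists a nondecreasing function $g^*:[0,1]\to\mathbb R$ such that $$\lambda(\{x\in[0,1]:|f(x)-g^*(x)|>\gamma\})=\inf_{g\in\mathcal M}\lambda(\{x\in[0,1]:|f(x)-g(x)|>\gamma\}).$$
   Context: $\mathcal M$ is the set of monotone nondecreasing functions $g:[0,1]\to\mathbb R$, and $\lambda$ is Lebesgue measure. *)

From HB Require Import structures.
From mathcomp Require Import all_boot all_order all_algebra.
From mathcomp Require Import all_classical all_reals all_analysis.
Set Implicit Arguments. Unset Strict Implicit. Unset Printing Implicit Defensive.
Import Order.TTheory GRing.Theory Num.Theory.
Local Open Scope classical_set_scope.
Local Open Scope ring_scope.

Definition monotone01 (R : realType) (g : R -> R) : Prop :=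
  {in `[0, 1] &, {homo g : x y / x <= y}}.

Definition bad_set (R : realType) (gamma : R) (f g : R -> R) : set R :=
  [set x | x \in `[0, 1] /\ gamma < `|f x - g x|].

From HB Require Import structures.
From mathcomp Require Import all_boot all_order all_algebra.
From mathcomp Require Import all_classical all_reals all_analysis.
From mathcomp Require Import lra measurable_realfun.
Import Order.TTheory GRing.Theory Num.Theory numFieldNormedType.Exports.
Local Open Scope classical_set_scope.
Local Open Scope ring_scope.

(* Write m(g) for the measure of the bad set of g and m0 for the infimum of m
   over monotone g.  Pointwise {max(g1,g2), min(g1,g2)} = {g1,g2}, so the bad
   sets of max(g1,g2) and min(g1,g2) have the same union and intersection as
   those of g1 and g2, and inclusion-exclusion gives
   m(max) + m(min) = m(g1) + m(g2).  Since min(g1,g2) is monotone, the excess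
   m - m0 is subadditive under max.
   Take monotone h_i with excess at most 1/(i+1) - 1/(i+2), clamped into the
   range of f (which does not enlarge bad sets) so that they are uniformly
   bounded.  By telescoping, max(h_n, ..., h_(n+k)) has excess at most
   1/(n+1).  Bad sets are defined by strict inequalities, so along a monotone
   pointwise limit the bad set of the limit lies in the liminf of the bad sets;
   continuity of the measure from below carries the bound to sup_(i>=n) h_i and
   then to G = limsup h_i, which is monotone with m(G) <= m0 + 1/(n+1) for
   every n. *)

Section measure_lemmas.
Local Open Scope ereal_scope.
Context {d} {T : measurableType d} {R : realType} (mu : {measure set T -> \bar R}).

Lemma measureUI (A B : set T) : measurable A -> measurable B ->
  mu (A `|` B) + mu (A `&` B) = mu A + mu B.
Proof.
move=> mA mB; have -> : A `|` B = A `|` (B `\` A) by rewrite setUDr setDv setD0.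
rewrite measureU //; [|exact: measurableD|exact: setDIK].
by rewrite (measureDI mu mB mA) setIC addeA.
Qed.

Lemma measure_liminf_le [A : (set T)^nat] [S : set T] [c : \bar R] :
  (forall n, measurable (A n)) -> (forall n, mu (A n) <= c) ->
  measurable S -> (forall x, S x -> \forall n \near \oo, A n x) ->
  mu S <= c.
Proof.
move=> mA Ac mS SA.
pose D N := \bigcap_(n in [set n | (N <= n)%N]) A n.
have mD N : measurable (D N).
  by apply: bigcap_measurable => [|k _]; [exists N => /= | exact: mA].
have D_nd : nondecreasing_seq D.
  move=> N M NM; apply/subsetPset => x DNx n /= Mn.
  exact/DNx/(leq_trans NM Mn).
have mUD : measurable (\bigcup_N D N) by exact: bigcupT_measurable.
apply: (@le_trans _ _ (mu (\bigcup_N D N))).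
  apply: le_measure; [by rewrite inE | by rewrite inE |].
  move=> x /SA [N _ AN]; exists N => //= n /AN.
apply: (cvge_to_le (@nondecreasing_cvg_mu _ _ _ mu _ mD mUD D_nd)).
apply: nearW => N /=; apply: le_trans (Ac N).
apply: le_measure; [by rewrite inE | by rewrite inE |].
by move=> x /(_ N (leqnn N)).
Qed.

End measure_lemmas.

Section sups_lemmas.
Context {R : realType}.
Implicit Types (u v : nat -> R) (c : R).

Lemma bounded_fun_between (T : Type) (u : T -> R) (a b : R) :
  (forall t, a <= u t <= b) -> bounded_fun u.
Proof.
move=> u_ab; have norm_u t : `|u t| <= `|a| + `|b|.
  have /andP[au ub] := u_ab t; rewrite ler_norml.
  have := ler_norm b; have := ler_norm (- a); rewrite normrN.
  have := normr_ge0 a; have := normr_ge0 b.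
  by move=> *; apply/andP; split; lra.
rewrite /bounded_near; near=> M => t _ /=.
by apply: le_trans (norm_u t) _; near: M; exact: nbhs_pinfty_ge.
Unshelve. all: by end_near. Qed.

Lemma sups_ge [u n k] : has_ubound (range u) -> (n <= k)%N -> u k <= sups u n.
Proof.
by move=> u_ub nk; apply: ub_le_sup; [exact: has_ubound_sdrop | exists k].
Qed.

Lemma sups_gt [u n c] : c < sups u n -> exists2 k, (n <= k)%N & c < u k.
Proof.
have sdrop_n0 : sdrop u n !=set0 by exists (u n), n => /=.
by move=> /(sup_gt sdrop_n0)[_ [k nk <-]]; exists k.
Qed.

Lemma le_sups u v n : has_ubound (range v) -> (forall k, u k <= v k) ->
  sups u n <= sups v n.
Proof.
move=> v_ub uv; apply: ge_sup; first by exists (u n), n => /=.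
by move=> _ [k nk <-]; exact: le_trans (uv k) (sups_ge v_ub nk).
Qed.

Lemma limn_sup_le_sups [u] n : bounded_fun u -> limn_sup u <= sups u n.
Proof.
move=> u_bd; rewrite limn_supE //.
by apply: ge_inf; [exact: bounded_fun_has_lbound_sups | exists n].
Qed.

Lemma limn_sup_lt [u c] : bounded_fun u -> limn_sup u < c ->
  exists n, sups u n < c.
Proof.
have sups_n0 : range (sups u) !=set0 by exists (sups u 0), 0%N.
by move=> u_bd; rewrite limn_supE // => /(inf_lt sups_n0)[_ [n _ <-]]; exists n.
Qed.

Lemma le_limn_sup u v : bounded_fun u -> bounded_fun v ->
  (forall k, u k <= v k) -> limn_sup u <= limn_sup v.
Proof.
move=> u_bd v_bd uv; rewrite [X in _ <= X]limn_supE //.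
apply: lb_le_inf; first by exists (sups v 0), 0%N.
move=> _ [n _ <-]; apply: le_trans (limn_sup_le_sups n u_bd) _.
exact: le_sups (bounded_fun_has_ubound v_bd) uv.
Qed.

End sups_lemmas.

Section clamp.
Context {R : realDomainType}.
Implicit Types a b c y : R.

Definition clamp a b y := Num.max a (Num.min y b).

Lemma clamp_nd a b : nondecreasing_fun (clamp a b).
Proof. by move=> x y xy; apply: le_max2 => //; apply: le_min2. Qed.

Lemma clamp_ge a b y : a <= clamp a b y.
Proof. by rewrite /clamp le_max lexx. Qed.

Lemma clamp_le a b y : a <= b -> clamp a b y <= b.
Proof. by move=> ab; rewrite /clamp ge_max ab ge_min lexx orbT. Qed.

Lemma clamp_id a b y : a <= y <= b -> clamp a b y = y.
Proof. by move=> /andP[ay yb]; rewrite /clamp min_l // max_r. Qed.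

Lemma clamp_gt a b y c : a <= c -> c < clamp a b y -> c < y.
Proof. by move=> ac; rewrite /clamp lt_max ltNge ac /= lt_min => /andP[]. Qed.

Lemma clamp_lt a b y c : c <= b -> clamp a b y < c -> y < c.
Proof.
by move=> cb; rewrite /clamp gt_max gt_min [b < c]ltNge cb orbF => /andP[].
Qed.

End clamp.

Section bad_set.
Context {R : realType} (gamma : R) (f : R -> R).
Hypothesis mf : measurable_fun `[(0 : R), 1] f.
Local Notation mu := (@lebesgue_measure R).
Local Notation bad := (bad_set gamma f).
Implicit Types g : R -> R.

Lemma bad_setP g x : bad g x <->
  x \in `[0, 1] /\ (f x + gamma < g x \/ g x < f x - gamma).
Proof.
rewrite /bad_set /= ltr_normr; split=> -[x01 bad_x]; split=> //.
  by case/orP: bad_x => ?; [right|left]; lra.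
by apply/orP; case: bad_x => ?; [right|left]; lra.
Qed.

Lemma eq_bad_set g1 g2 : {in `[0, 1], g1 =1 g2} -> bad g1 = bad g2.
Proof.
by move=> g12; apply/seteqP; split=> x [x01]; rewrite /bad_set /= (g12 x x01).
Qed.

Lemma bad_setU_max_min g1 g2 :
  bad (g1 \max g2) `|` bad (g1 \min g2) = bad g1 `|` bad g2.
Proof.
apply/seteqP; split=> x /=; rewrite /bad_set /=;
  by case: (leP (g1 x) (g2 x)) => _; tauto.
Qed.

Lemma bad_setI_max_min g1 g2 :
  bad (g1 \max g2) `&` bad (g1 \min g2) = bad g1 `&` bad g2.
Proof.
apply/seteqP; split=> x /=; rewrite /bad_set /=;
  by case: (leP (g1 x) (g2 x)) => _; tauto.
Qed.

Lemma bad_set_clamp lo hi g : 0 <= gamma ->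
  {in `[0, 1], forall x, lo <= f x <= hi} -> bad (clamp lo hi \o g) `<=` bad g.
Proof.
move=> gamma_ge0 f_range x /bad_setP[x01 bad_x]; apply/bad_setP; split=> //.
have /andP[lo_f f_hi] := f_range x x01.
case: bad_x => /= bad_x; [left; move: bad_x; apply: clamp_gt
                         | right; move: bad_x; apply: clamp_lt]; lra.
Qed.

Lemma measurable_bad_set g : measurable_fun `[(0 : R), 1] g -> measurable (bad g).
Proof.
move=> mg; have m01 : measurable `[(0 : R), 1]%classic by exact: measurable_itv.
have mfg : measurable_fun `[(0 : R), 1] (fun x => `|f x - g x|).
  by apply: measurableT_comp => //; exact: measurable_funB.
have := mfg m01 `]gamma, +oo[%classic (measurable_itv _).
congr measurable; apply/seteqP; split=> x /=;
  rewrite /bad_set /= in_itv /= => -[-> fgx];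
  by split=> //; move: fgx; rewrite in_itv /= ?andbT.
Qed.

Lemma bad_set_le1 g : (mu (bad g) <= 1)%E.
Proof.
have mu01 : mu `[(0 : R), 1]%classic = 1%E.
  by rewrite lebesgue_measure_itv /= lte01 oppr0 adde0.
rewrite -mu01.
by apply: le_outer_measure => x [].
Qed.

Definition bad_measure g : R := fine (mu (bad g)).

Lemma bad_measureE g : mu (bad g) = (bad_measure g)%:E.
Proof.
rewrite /bad_measure fineK // ge0_fin_numE ?measure_ge0 //.
exact: le_lt_trans (bad_set_le1 g) (ltry 1).
Qed.

Definition bad_inf : R := fine (ereal_inf [set mu (bad g) | g in @monotone01 R]).

Lemma bad_infE : ereal_inf [set mu (bad g) | g in @monotone01 R] = bad_inf%:E.
Proof.
rewrite /bad_inf fineK // ge0_fin_numE; last first.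
  by apply: le_ereal_inf_tmp => _ [g _ <-]; exact: measure_ge0.
apply: le_lt_trans (ltry 1); apply: le_trans (bad_set_le1 (fun=> 0)).
by apply: ereal_inf_lbound; exists (fun=> 0).
Qed.

Lemma bad_inf_le g : monotone01 g -> bad_inf <= bad_measure g.
Proof.
move=> g_mono; rewrite -lee_fin -bad_infE -bad_measureE.
by apply: ereal_inf_lbound; exists g.
Qed.

Lemma bad_inf_adherent [e] : 0 < e ->
  exists2 g, monotone01 g & bad_measure g < bad_inf + e.
Proof.
move=> e_gt0.
have inf_fin : ereal_inf [set mu (bad g) | g in @monotone01 R] \is a fin_num.
  by rewrite bad_infE.
have [_ [g g_mono <-]] := lb_ereal_inf_adherent e_gt0 inf_fin.
by rewrite bad_infE bad_measureE -EFinD lte_fin; exists g.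
Qed.

Lemma nondecreasing_monotone01 g : nondecreasing_fun g -> monotone01 g.
Proof. by move=> g_nd x y _ _; exact: g_nd. Qed.

Lemma bad_measure_max_min [g1 g2] : nondecreasing_fun g1 -> nondecreasing_fun g2 ->
  bad_measure (g1 \max g2) + bad_measure (g1 \min g2) =
  bad_measure g1 + bad_measure g2.
Proof.
move=> nd1 nd2.
have mbad g : nondecreasing_fun g -> measurable (bad g).
  by move=> g_nd; apply: measurable_bad_set; exact: nondecreasing_measurable.
have mbad_max : measurable (bad (g1 \max g2)).
  by apply: mbad => x y xy; apply: le_max2; [exact: nd1 | exact: nd2].
have mbad_min : measurable (bad (g1 \min g2)).
  by apply: mbad => x y xy; apply: le_min2; [exact: nd1 | exact: nd2].
apply: EFin_inj; rewrite !EFinD -!bad_measureE -measureUI //.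
by rewrite bad_setU_max_min bad_setI_max_min measureUI //; exact: mbad.
Qed.

Lemma bad_measure_max [g1 g2] : nondecreasing_fun g1 -> nondecreasing_fun g2 ->
  bad_measure (g1 \max g2) + bad_inf <= bad_measure g1 + bad_measure g2.
Proof.
move=> nd1 nd2; rewrite -(bad_measure_max_min nd1 nd2) lerD2l bad_inf_le //.
apply: nondecreasing_monotone01 => x y xy.
by apply: le_min2; [exact: nd1 | exact: nd2].
Qed.

End bad_set.

Section limsup_of_minimizing_sequence.
Context {R : realType} {gamma : R} {f : R -> R} {lo hi : R}.
Hypothesis gamma_ge0 : 0 <= gamma.
Hypothesis mf : measurable_fun `[(0 : R), 1] f.
Hypothesis f_range : {in `[0, 1], forall x, lo <= f x <= hi}.
Context {h : nat -> R -> R}.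
Let eps (i : nat) : R := i.+1%:R^-1.
Hypothesis h_mono : forall i, monotone01 (h i).
Hypothesis h_min :
  forall i, bad_measure gamma f (h i) <= bad_inf gamma f + (eps i - eps i.+1).
Local Notation mu := (@lebesgue_measure R).
Local Notation bad := (bad_set gamma f).
Local Notation m := (bad_measure gamma f).
Local Notation minf := (bad_inf gamma f).

Let lo_le_hi : lo <= hi.
Proof.
have /andP[lo_f0 f0_hi] : lo <= f 0 <= hi.
  by apply: f_range; rewrite in_itv /= lexx ler01.
exact: le_trans lo_f0 f0_hi.
Qed.

Definition hclamp i := clamp lo hi \o h i \o clamp 0 1.

Lemma hclamp_nd i : nondecreasing_fun (hclamp i).
Proof.
move=> x y xy; apply/clamp_nd/h_mono; rewrite ?in_itv /= ?clamp_ge ?clamp_le //.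
exact: clamp_nd.
Qed.

Lemma hclamp_bounded x : bounded_fun (hclamp^~ x).
Proof.
by apply: (@bounded_fun_between _ _ _ lo hi) => i; rewrite clamp_ge clamp_le.
Qed.

Lemma hclamp_ub x : has_ubound (range (hclamp^~ x)).
Proof. exact/bounded_fun_has_ubound/hclamp_bounded. Qed.

Lemma bad_measure_hclamp i : m (hclamp i) <= minf + (eps i - eps i.+1).
Proof.
apply: le_trans (h_min i); rewrite -lee_fin -!bad_measureE.
have -> : bad (h i) = bad (h i \o clamp 0 1).
  by apply: eq_bad_set => x; rewrite in_itv /= => x01; rewrite /= clamp_id.
exact/le_outer_measure/bad_set_clamp.
Qed.

Fixpoint partial_max (n k : nat) : R -> R :=
  if k is k'.+1 then partial_max n k' \max hclamp (n + k) else hclamp n.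

Lemma partial_max_nd n k : nondecreasing_fun (partial_max n k).
Proof.
elim: k => [|k IHk] /=; first exact: hclamp_nd.
by move=> x y xy; apply: le_max2; [exact: IHk | exact: hclamp_nd].
Qed.

Lemma le_partial_max n k j x : (j <= k)%N -> hclamp (n + j) x <= partial_max n k x.
Proof.
elim: k => [|k IHk] /=; first by rewrite leqn0 => /eqP ->; rewrite addn0.
rewrite leq_eqVlt ltnS => /orP[/eqP ->|jk]; rewrite le_max ?lexx ?orbT //.
by rewrite IHk.
Qed.

Lemma partial_max_le_sups n k x : partial_max n k x <= sups (hclamp^~ x) n.
Proof.
elim: k => [|k IHk]; first exact: sups_ge (hclamp_ub x) (leqnn n).
by rewrite [partial_max _ _]/= ge_max IHk sups_ge ?leq_addr //; exact: hclamp_ub.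
Qed.

Lemma bad_measure_partial_max n k :
  m (partial_max n k) <= minf + (eps n - eps (n + k).+1).
Proof.
elim: k => [|k IHk] /=; first by rewrite addn0; exact: bad_measure_hclamp.
have := bad_measure_max gamma f mf (partial_max_nd n k) (hclamp_nd (n + k.+1)).
have := bad_measure_hclamp (n + k.+1).
by rewrite addnS; lra.
Qed.

Lemma sups_nd n : nondecreasing_fun (fun x => sups (hclamp^~ x) n).
Proof. by move=> x y xy; apply: le_sups (hclamp_ub y) _ => i; exact: hclamp_nd. Qed.

Lemma bad_measure_sups n : m (fun x => sups (hclamp^~ x) n) <= minf + eps n.
Proof.
rewrite -lee_fin -bad_measureE.
apply: (measure_liminf_le mu (A := fun k => bad (partial_max n k))).
- move=> k; apply: (measurable_bad_set gamma f mf).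
  exact: nondecreasing_measurable (partial_max_nd n k).
- move=> k /=; rewrite bad_measureE lee_fin.
  apply: le_trans (bad_measure_partial_max n k) _.
  by rewrite lerD2l lerBlDr lerDl invr_ge0 ler0n.
- apply: (measurable_bad_set gamma f mf).
  exact: nondecreasing_measurable (sups_nd n).
move=> x /bad_setP[x01 [fx_lt|fx_gt]].
  have [k nk lt_k] := sups_gt fx_lt; exists (k - n)%N => // j /= kj.
  apply/bad_setP; split=> //; left; apply: lt_le_trans lt_k _.
  by rewrite -(subnKC nk); exact: le_partial_max.
apply: nearW => k; apply/bad_setP; split=> //; right.
exact: le_lt_trans (partial_max_le_sups n k x) fx_gt.
Qed.

Definition gstar x : R := limn_sup (hclamp^~ x).

Lemma gstar_nd : nondecreasing_fun gstar.
Proof.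
move=> x y xy; apply: le_limn_sup; [exact: hclamp_bounded.. |].
by move=> i; exact: hclamp_nd.
Qed.

Lemma bad_measure_gstar n : m gstar <= minf + eps n.
Proof.
rewrite -lee_fin -bad_measureE.
pose A k := bad (fun x => sups (hclamp^~ x) (n + k)).
apply: (measure_liminf_le mu (A := A)).
- move=> k; apply: (measurable_bad_set gamma f mf).
  exact: nondecreasing_measurable (sups_nd (n + k)).
- move=> k /=; rewrite bad_measureE lee_fin; apply: le_trans (bad_measure_sups _) _.
  by rewrite lerD2l lef_pV2 ?posrE // ler_nat ltnS leq_addr.
- apply: (measurable_bad_set gamma f mf); exact: nondecreasing_measurable gstar_nd.
move=> x /bad_setP[x01 [fx_lt|fx_gt]].
  apply: nearW => k; apply/bad_setP; split=> //; left.
  exact: lt_le_trans fx_lt (limn_sup_le_sups _ (hclamp_bounded x)).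
have [j lt_j] := limn_sup_lt (hclamp_bounded x) fx_gt; exists j => // k /= jk.
apply/bad_setP; split=> //; right; apply: le_lt_trans lt_j.
by apply: nonincreasing_sups (hclamp_ub x) _ _ _; exact: leq_trans jk (leq_addl _ _).
Qed.

Lemma bad_measure_gstarE : m gstar = minf.
Proof.
apply/eqP; rewrite eq_le bad_inf_le ?andbT; last first.
  exact: nondecreasing_monotone01 gstar_nd.
by rewrite leNgt; apply/negP => /ltr_add_invr[n]; rewrite ltNge bad_measure_gstar.
Qed.

End limsup_of_minimizing_sequence.

Theorem mainTheorem11 (R : realType) (gamma : R) (f : R -> R) :
  0 < gamma ->
  {within `[0, 1], continuous f} ->
  exists g : R -> R, monotone01 g /\
    (@lebesgue_measure R (bad_set gamma f g) =
     ereal_inf [set @lebesgue_measure R (bad_set gamma f h) | h in @monotone01 R])%E.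
Proof.
move=> gamma_gt0 fc.
have mf : measurable_fun `[(0 : R), 1] f.
  exact: subspace_continuous_measurable_fun (measurable_itv _) fc.
have [xmin _ f_ge] := EVT_min ler01 fc.
have [xmax _ f_le] := EVT_max ler01 fc.
have f_range : {in `[0, 1], forall x, f xmin <= f x <= f xmax}.
  by move=> x x01; rewrite f_ge ?f_le.
have /choice[h /all_and2[h_mono h_min]] : forall i : nat, exists h, monotone01 h /\
    bad_measure gamma f h <= bad_inf gamma f + (i.+1%:R^-1 - i.+2%:R^-1).
  move=> i; have tol_gt0 : 0 < i.+1%:R^-1 - i.+2%:R^-1 :> R.
    by rewrite subr_gt0 ltf_pV2 ?posrE ?ltr_nat.
  by have [g g_mono /ltW] := bad_inf_adherent gamma f tol_gt0; exists g.
exists (gstar (lo := f xmin) (hi := f xmax) (h := h)); split.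
  exact: nondecreasing_monotone01 (gstar_nd f_range h_mono).
rewrite bad_infE bad_measureE.
by rewrite (bad_measure_gstarE (ltW gamma_gt0) mf f_range h_mono h_min).
Qed.
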